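(* If $\mathcal C\subseteq 2^{[n]}$ is inductively pierced, then $\mathcal C$ is degree two, i.e. every element of $\mathrm{CF}(J_\mathcal C)$ has degree two.
   Context: A code is a set $\mathcal C\subseteq 2^{[n]}$, $[n]=\{1,\dots,n\}$, elements of $[n]$ being neurons. Standing conventions: $\emptyset\in\mathcal C$; every neuron lies in some codeword; no two distinct neurons lie in exactly the same codewords. For $i\in[n]$, $\mathcal C\setminus i$ is obtained by removing $i$ from every codeword. For $\sigma\subseteq\tau$, $[\sigma,\tau]=\{\gamma:\sigma\subseteq\gamma\subseteq\tau\}$, of rank $|\tau\setminus\sigma|$. A neuron $i$ is a $k$-piercing of $\mathcal C$ if there are $\sigma\subseteq\tau\subseteq[n]\setminus\{i\}$ with $[\sigma,\tau]$ of rank $k$, $[\sigma,\tau]\subseteq\mathcal C\setminus i$, and $\mathcal C=(\mathcal C\setminus i)\cup[\sigma\cup\{i\},\tau\cup\{i\}]$. A code is $k$-inductively pierced if $\mathcal C=\{\emptyset\}$, or some neuron $i$ is a $k'$-piercing for some $k'\le k$ and $\mathcal C\setminus i$ is $k$-inductively pierced; inductively pierced means $k$-inductively pierced for some $k$. A pseudo-monomial in $\mathbb F_2[x_1,\dots,x_n]$ is $\prod_{i\in\sigma}x_i\prod_{j\in\tau}(1-x_j)$ with $\sigma\cap\tau=\emptyset$, ordered by divisibility. $J_\mathcal C=\langle\rho_\sigma:\sigma\notin\mathcal C\rangle$ with $\rho_\sigma=\prod_{i\in\sigma}x_i\prod_{j\notin\sigma}(1-x_j)$, and $\mathrm{CF}(J_\mathcal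 C)$ is the set of minimal pseudo-monomials in $J_\mathcal C$. *)

From mathcomp Require Import all_boot all_algebra.
From mathcomp Require Import mpoly.
Set Implicit Arguments. Unset Strict Implicit. Unset Printing Implicit Defensive.
Import GRing.Theory.
Local Open Scope ring_scope.

(* Neurons are the elements of 'I_n (i.e. [n] = {1..n} shifted to {0..n-1}).
   A code is a set of codewords, each codeword a subset of 'I_n. *)
Definition code (n : nat) := {set {set 'I_n}}.

Definition code_conventions (n : nat) (C : code n) : Prop :=
  [/\ set0 \in C,
      (forall i : 'I_n, exists2 c, c \in C & i \in c) &
      (forall i j : 'I_n, (forall c, c \in C -> (i \in c) = (j \in c)) -> i = j)].

(* C \ i : remove neuron i from every codeword (ambient neuron set kept). *)
Definition code_remove (n : nat) (i : 'I_n) (C : code n) : code n :=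
  [set c :\ i | c in C].

Definition interval (n : nat) (s t : {set 'I_n}) : {set {set 'I_n}} :=
  [set g : {set 'I_n} | (s \subset g) && (g \subset t)].

Definition is_piercing (n : nat) (k : nat) (i : 'I_n) (C : code n) : Prop :=
  exists s t : {set 'I_n},
    [/\ s \subset t, i \notin t, #|t :\: s| = k,
        interval s t \subset code_remove i C &
        C = code_remove i C :|: [set g :|: [set i] | g in interval s t]].

Inductive k_ind_pierced (n : nat) (k : nat) : code n -> Prop :=
  | kip_base : k_ind_pierced k [set set0]
  | kip_step (C : code n) (i : 'I_n) (k' : nat) :
      (k' <= k)%N -> is_piercing k' i C -> k_ind_pierced k (code_remove i C) ->
      k_ind_pierced k C.

Definition ind_pierced (n : nat) (C : code n) : Prop :=
  exists k, k_ind_pierced k C.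

Notation F2poly n := {mpoly 'F_2[n]}.

Definition pmono (n : nat) (s t : {set 'I_n}) : F2poly n :=
  (\prod_(i in s) 'X_i) * \prod_(j in t) (1 - 'X_j).

Definition is_pseudo_monomial (n : nat) (f : F2poly n) : Prop :=
  exists s t : {set 'I_n}, [disjoint s & t] /\ f = pmono s t.

Definition rho (n : nat) (s : {set 'I_n}) : F2poly n := pmono s (~: s).

Definition in_neural_ideal (n : nat) (C : code n) (f : F2poly n) : Prop :=
  exists g : {set 'I_n} -> F2poly n,
    f = \sum_(s : {set 'I_n} | s \notin C) g s * rho s.

Definition mdivides (n : nat) (g f : F2poly n) : Prop :=
  exists h : F2poly n, f = h * g.

Definition in_canonical_form (n : nat) (C : code n) (f : F2poly n) : Prop :=
  [/\ is_pseudo_monomial f, in_neural_ideal C f &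
      forall g, is_pseudo_monomial g -> in_neural_ideal C g ->
        mdivides g f -> g = f].

(* total degree: msize p = 1 + total degree (0 for p = 0) *)
Definition mpoly_degree (n : nat) (f : F2poly n) : nat := (msize f).-1.

Definition degree_two (n : nat) (C : code n) : Prop :=
  forall f, in_canonical_form C f -> mpoly_degree f = 2%N.

From Pilot Require Import Defs.
From mathcomp Require Import all_boot all_algebra.
From mathcomp Require Import mpoly zify.
(* Re-imported so that [interval] means the code interval, not mathcomp's type. *)
Import Defs.
Set Implicit Arguments. Unset Strict Implicit. Unset Printing Implicit Defensive.
Import GRing.Theory.
Local Open Scope ring_scope.

(* A pseudo-monomial x_s (1 - x_t) lies in J_C iff no codeword c satisfies
   s <= c <= [n] - t: elements of J_C vanish at every codeword, and x_s (1 - x_t)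
   is the sum of the rho_c over that interval.  Hence CF(J_C) consists of the
   pseudo-monomials of the minimal such "forbidden" pairs (s, t), of degree
   |s| + |t|.  The conventions (the empty word is a codeword, every neuron
   fires) force |s| + |t| >= 2.  For the upper bound, induct along the
   piercings: if neuron i pierces C at the interval [lo, hi], a minimal pair
   avoiding i is still minimal for C \ i; i can never lie in t, since
   C \ i <= C lets one drop it from t; and if i lies in s, then either some
   k in s - i lies outside hi and ({i, k}, {}) is forbidden, or some j in t lies
   in lo and ({i}, {j}) is forbidden, or else (s - i) + lo + i is a codeword
   in the interval of (s, t).  Only the shape C = (C \ i) + {g + i : g in [lo, hi]}
   of a piercing is used, not its rank. *)

Lemma msize_1subX (R : nzRingType) (n : nat) (i : 'I_n) :
  msize (1 - 'X_i : {mpoly R[n]}) = 2%N.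
Proof.
apply/anti_leq/andP; split.
  by apply: leq_trans (msizeD_le _ _) _; rewrite msizeN msizeX mdeg1 msize1.
have : U_(i)%MM \in msupp (1 - 'X_i : {mpoly R[n]}).
  by rewrite mcoeff_msupp mcoeffB mcoeff1 mcoeffXU eqxx mnm1_eq0 sub0r oppr_eq0 oner_neq0.
by move/msize_mdeg_lt; rewrite mdeg1.
Qed.

Lemma msize_prod_deg1 (R : idomainType) (n : nat) (I : Type) (r : seq I)
    (F : I -> {mpoly R[n]}) :
  (forall x, msize (F x) = 2%N) -> msize (\prod_(x <- r) F x) = (size r).+1.
Proof.
move=> msizeF; elim: r => [|x r IHr]; first by rewrite big_nil msize1.
by rewrite big_cons msizeM ?msizeF ?IHr // -msize_poly_eq0 ?msizeF ?IHr.
Qed.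

Section NeuralIdeal.
Variable n : nat.
Implicit Types (C : code n) (a b c s t : {set 'I_n}).

Lemma msize_pmono s t : msize (pmono s t) = (#|s| + #|t|)%N.+1.
Proof.
have msize_prodX (A : {set 'I_n}) :
    msize (\prod_(i <- enum A) 'X_i : F2poly n) = #|A|.+1.
  by rewrite msize_prod_deg1 -?cardE // => i; rewrite msizeX mdeg1.
have msize_prod1subX (A : {set 'I_n}) :
    msize (\prod_(i <- enum A) (1 - 'X_i) : F2poly n) = #|A|.+1.
  by rewrite msize_prod_deg1 -?cardE // => i; apply: msize_1subX.
rewrite /pmono -!big_enum /= msizeM -?msize_poly_eq0 ?msize_prodX ?msize_prod1subX //.
by rewrite addSn addnS.
Qed.

Lemma pmono_setU1l s t k : k \notin s -> pmono (k |: s) t = 'X_k * pmono s t.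
Proof. by move=> ks; rewrite /pmono big_setU1 //= mulrA. Qed.

Lemma pmono_setU1r s t k : k \notin t -> pmono s (k |: t) = (1 - 'X_k) * pmono s t.
Proof. by move=> kt; rewrite /pmono big_setU1 //= mulrCA. Qed.

Lemma pmono_divides s t s' t' :
  s' \subset s -> t' \subset t -> mdivides (pmono s' t') (pmono s t).
Proof.
move=> ss' tt'; exists (pmono (s :\: s') (t :\: t')).
rewrite /pmono (big_setID s') (big_setID t' (A := t)) /=.
by rewrite (setIidPr ss') (setIidPr tt') mulrACA mulrC.
Qed.

Lemma pmono_subset_inj s t s' t' :
  s' \subset s -> t' \subset t -> pmono s' t' = pmono s t -> s' = s /\ t' = t.
Proof.
move=> ss' tt' /(congr1 (fun p => msize p)); rewrite !msize_pmono => /succn_inj /eqP.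
have [_ ->] := leqif_add (subset_leqif_cards ss') (subset_leqif_cards tt').
by case/andP=> /eqP -> /eqP ->.
Qed.

Lemma interval_id s : interval s s = [set s].
Proof. by apply/setP => c; rewrite !inE eq_sym eqEsubset. Qed.

Lemma in_interval_setU1l s t k c :
  (c \in interval (k |: s) t) = (c \in interval s t) && (k \in c).
Proof. by rewrite !inE subUset sub1set; case: (k \in c); rewrite ?andbT ?andbF. Qed.

Lemma in_interval_setU1r s t k c :
  (c \in interval s (~: (k |: t))) = (c \in interval s (~: t)) && (k \notin c).
Proof.
rewrite !inE setCU subsetI [c \subset ~: [set k]]subsetC sub1set inE.
by case: (k \in c); rewrite ?andbT ?andbF.
Qed.

Definition indicator c : 'I_n -> 'F_2 := fun i => (i \in c)%:R.

Lemma meval_pmono (v : 'I_n -> 'F_2) s t :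
  (pmono s t).@[v] = \prod_(i in s) v i * \prod_(j in t) (1 - v j).
Proof.
rewrite /pmono mevalM !rmorph_prod /=; congr (_ * _).
  by apply: eq_bigr => i _; rewrite mevalXU.
by apply: eq_bigr => i _; rewrite mevalB meval1 mevalXU.
Qed.

Lemma meval_pmono_indicator_neq0 c s t :
  ((pmono s t).@[indicator c] != 0) = (c \in interval s (~: t)).
Proof.
have ind_neq0 i : (indicator c i != 0) = (i \in c).
  by rewrite /indicator; case: (i \in c); rewrite ?eqxx ?oner_neq0.
have ind1_neq0 i : (1 - indicator c i != 0) = (i \notin c).
  by rewrite /indicator; case: (i \in c); rewrite ?subrr ?eqxx ?subr0 ?oner_neq0.
rewrite meval_pmono mulf_eq0 negb_or inE subsetC.
congr andb; apply/prodf_neq0/subsetP => Hc i Hi.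
- by rewrite -ind_neq0 Hc.
- by rewrite ind_neq0 Hc.
- by rewrite inE -ind1_neq0 Hc.
- by rewrite ind1_neq0 -in_setC Hc.
Qed.

Lemma pmono_sum_rho s t :
  [disjoint s & t] -> pmono s t = \sum_(c in interval s (~: t)) rho c.
Proof.
move Em : #|~: (s :|: t)| => m; elim: m s t Em => [|m IHm] s t Em dst.
  have st_full : s :|: t = setT by apply/setC_inj/eqP; rewrite setCT -cards_eq0 Em.
  have -> : t = ~: s.
    apply/setP => x; rewrite inE; apply/idP/idP => [xt|xs].
      by rewrite (disjointFl dst xt).
    by move/setP/(_ x): st_full; rewrite !inE (negbTE xs).
  by rewrite setCK interval_id big_set1.
have [k] : {k | k \in ~: (s :|: t)} by apply/sigW/card_gt0P; rewrite Em.
rewrite in_setC in_setU negb_or => /andP [ks kt].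
have card_free : #|~: (k |: (s :|: t))| = m.
  have -> : ~: (k |: (s :|: t)) = ~: (s :|: t) :\ k.
    by apply/setP => x; rewrite !inE negb_or andbC.
  by move: Em; rewrite (cardsD1 k) !inE (negbTE ks) (negbTE kt) => -[].
have -> : pmono s t = pmono (k |: s) t + pmono s (k |: t).
  by rewrite pmono_setU1l // pmono_setU1r // -mulrDl addrC subrK mul1r.
rewrite (bigID (fun c => k \in c)) /= IHm ?IHm.
- by congr (_ + _); apply: eq_bigl => c; rewrite ?in_interval_setU1l ?in_interval_setU1r.
- by rewrite setUCA.
- rewrite disjoint_sym disjoints_subset subUset sub1set inE ks.
  by rewrite -disjoints_subset disjoint_sym.
- by rewrite -setUA.
- by rewrite disjoints_subset subUset sub1set inE kt -disjoints_subset.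
Qed.

Definition forbidden C s t := forall c, c \in C -> c \notin interval s (~: t).

Lemma neural_ideal_forbidden C s t : in_neural_ideal C (pmono s t) -> forbidden C s t.
Proof.
move=> [g Eg] c cC; rewrite -meval_pmono_indicator_neq0 Eg negbK rmorph_sum /=.
apply/eqP/big1 => x xC; rewrite mevalM.
have /negPn/eqP -> : ~~ ((rho x).@[indicator c] != 0).
  rewrite meval_pmono_indicator_neq0 setCK interval_id inE.
  by apply: contraNN xC => /eqP <-.
by rewrite mulr0.
Qed.

Lemma neural_ideal_sum_rho C (I : {set {set 'I_n}}) :
  [disjoint I & C] -> in_neural_ideal C (\sum_(c in I) rho c).
Proof.
move=> dIC; exists (fun c => (c \in I)%:R).
rewrite [RHS](eq_bigr (fun c => if c \in I then rho c else 0)); last first.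
  by move=> c _; case: (c \in I); rewrite ?mulr1n ?mul1r ?mul0r.
rewrite -big_mkcondr; apply: eq_bigl => c.
by case cI: (c \in I); rewrite ?andbF ?andbT ?(disjointFr dIC cI).
Qed.

Lemma forbidden_neural_ideal C s t :
  [disjoint s & t] -> forbidden C s t -> in_neural_ideal C (pmono s t).
Proof.
move=> dst fst; rewrite pmono_sum_rho //; apply: neural_ideal_sum_rho.
by rewrite disjoint_sym disjoints_subset; apply/subsetP => c cC; rewrite inE fst.
Qed.

Definition minimal_forbidden C s t :=
  forbidden C s t /\
  forall s' t', s' \subset s -> t' \subset t -> forbidden C s' t' -> s' = s /\ t' = t.

Lemma canonical_form_minimal_forbidden C s t :
  [disjoint s & t] -> in_canonical_form C (pmono s t) -> minimal_forbidden C s t.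
Proof.
move=> dst [_ Jst minJst]; split=> [|s' t' ss' tt' fst'].
  exact: neural_ideal_forbidden.
have ds't' : [disjoint s' & t'] by apply: disjointWl ss' (disjointWr tt' dst).
apply: pmono_subset_inj ss' tt' (minJst _ _ _ (pmono_divides ss' tt')).
  by exists s', t'.
exact: forbidden_neural_ideal.
Qed.

Lemma forbidden_card_ge2 C s t :
  code_conventions C -> forbidden C s t -> (2 <= #|s| + #|t|)%N.
Proof.
case=> C0 Ccover _ fst; rewrite leqNgt; apply/negP => small.
have [s0 | [x xs]] := set_0Vmem s.
  by have := fst _ C0; rewrite s0 !inE !sub0set.
have s_gt0 : (0 < #|s|)%N by apply/card_gt0P; exists x.
have card_s : #|s| = 1%N by lia.
have Es : s = [set x] by apply/esym/eqP; rewrite eqEcard sub1set xs cards1 card_s.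
have Et : t = set0 by apply/eqP; rewrite -cards_eq0; lia.
have [c cC xc] := Ccover x.
by have := fst c cC; rewrite Es Et !inE sub1set xc setC0 subsetT.
Qed.

Lemma minimal_forbidden_trivial_code s t :
  minimal_forbidden [set set0] s t -> #|s| = 1%N /\ t = set0.
Proof.
case=> fst minst.
have [s0 | [x xs]] := set_0Vmem s.
  by have := fst _ (set11 _); rewrite s0 !inE !sub0set.
have [<- <-] : [set x] = s /\ set0 = t.
  apply: minst; rewrite ?sub1set ?sub0set // => c /set1P ->.
  by rewrite !inE sub1set inE.
by rewrite cards1.
Qed.

Lemma in_interval_setD1 c a b i :
  i \notin a -> c \in interval a (~: (b :\ i)) -> c :\ i \in interval a (~: b).
Proof.
move=> ia; rewrite !inE subsetD1 ia andbT => /andP [ac cb]; rewrite ac /=.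
apply/subsetP => x; rewrite !inE => /andP [xi xc].
by move/subsetP: cb => /(_ x xc); rewrite !inE xi.
Qed.

Lemma in_interval_setD1_notin c a b i : i \notin a -> i \notin b ->
  (c :\ i \in interval a (~: b)) = (c \in interval a (~: b)).
Proof.
move=> ia ib; rewrite !inE subsetD1 ia andbT; congr andb.
apply/subsetP/subsetP => cb x xc.
  have [-> | xi] := eqVneq x i; first by rewrite inE.
  by apply: cb; rewrite !inE xi.
by apply: cb; move: xc; rewrite inE => /andP [].
Qed.

Lemma forbidden_setD1 C a b i :
  code_remove i C \subset C -> i \notin a -> forbidden C a b -> forbidden C a (b :\ i).
Proof.
move=> remC ia fab c cC; apply/negP => /(in_interval_setD1 ia); apply/negP/fab.
by apply: (subsetP remC); apply: imset_f.
Qed.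

Lemma minimal_forbidden_notin C a b i :
  code_remove i C \subset C -> i \notin a -> minimal_forbidden C a b -> i \notin b.
Proof.
move=> remC ia [fab minab].
have [_ <-] := minab a (b :\ i) (subxx a) (subD1set b i) (forbidden_setD1 remC ia fab).
by rewrite !inE eqxx.
Qed.

Lemma forbidden_code_remove C a b i : i \notin a -> i \notin b ->
  forbidden (code_remove i C) a b <-> forbidden C a b.
Proof.
move=> ia ib; split=> fab c cC.
  by rewrite -(in_interval_setD1_notin c ia ib); apply: fab; apply: imset_f.
by case/imsetP: cC => c0 c0C ->; rewrite in_interval_setD1_notin // fab.
Qed.

Lemma minimal_forbidden_code_remove C a b i : i \notin a -> i \notin b ->
  minimal_forbidden C a b -> minimal_forbidden (code_remove i C) a b.
Proof.
move=> ia ib [fab minab]; split=> [|a' b' aa' bb' fab'].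
  exact/(forbidden_code_remove C ia ib).
have ia' : i \notin a' := contra (subsetP aa' i) ia.
have ib' : i \notin b' := contra (subsetP bb' i) ib.
exact: minab aa' bb' ((forbidden_code_remove C ia' ib').1 fab').
Qed.

Section Piercing.
Variables (C : code n) (i : 'I_n) (lo hi : {set 'I_n}).
Hypotheses (lo_hi : lo \subset hi)
  (C_def : C = code_remove i C :|: [set g :|: [set i] | g in interval lo hi]).

Lemma pierced_codeword c :
  c \in C -> i \in c -> exists2 g, g \in interval lo hi & c = g :|: [set i].
Proof.
rewrite {1}C_def in_setU => /orP [/imsetP [c0 _ ->] | /imsetP [g gI ->]].
  by rewrite !inE eqxx.
by exists g.
Qed.

Lemma pierced_codeword_mem g : g \in interval lo hi -> g :|: [set i] \in C.
Proof. by move=> gI; rewrite C_def in_setU; apply/orP; right; apply: imset_f. Qed.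

Lemma pierced_forbidden_pair k : k != i -> k \notin hi -> forbidden C [set i; k] set0.
Proof.
move=> ki khi c cC; rewrite !inE setC0 subsetT andbT subUset !sub1set.
apply/negP => /andP [ic kc].
have [g] := pierced_codeword cC ic; rewrite inE => /andP [_ ghi] Ec.
move: kc; rewrite Ec !inE (negbTE ki) orbF => /(subsetP ghi).
by rewrite (negbTE khi).
Qed.

Lemma pierced_forbidden_sep j : j \in lo -> forbidden C [set i] [set j].
Proof.
move=> jlo c cC; rewrite !inE sub1set; apply/negP => /andP [ic cj].
have [g] := pierced_codeword cC ic; rewrite inE => /andP [log _] Ec.
have : j \in c by rewrite Ec inE (subsetP log j jlo).
by move/(subsetP cj); rewrite !inE eqxx.
Qed.

Lemma pierced_not_forbidden a b :
  i \in a -> [disjoint a & b] -> a :\ i \subset hi -> [disjoint b & lo] ->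
  ~ forbidden C a b.
Proof.
move=> ia dab ahi dblo fab.
set g := a :\ i :|: lo.
have gI : g \in interval lo hi by rewrite inE subsetUr subUset ahi lo_hi.
apply/negP: (fab _ (pierced_codeword_mem gI)).
rewrite negbK inE; apply/andP; split.
  apply/subsetP => x xa; rewrite !inE xa andbT.
  by case: (x == i); rewrite ?orbT.
rewrite !subUset sub1set inE (disjointFr dab ia) -!disjoints_subset.
by rewrite (disjointWl (subD1set a i) dab) disjoint_sym dblo.
Qed.

Lemma pierced_minimal_forbidden_card a b :
  i \in a -> [disjoint a & b] -> minimal_forbidden C a b -> (#|a| + #|b| = 2)%N.
Proof.
move=> ia dab [fab minab].
have [ahi | /subsetPn [k]] := boolP (a :\ i \subset hi); last first.
  rewrite !inE => /andP [ki ka] khi.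
  have [<- <-] : [set i; k] = a /\ set0 = b.
    apply: (minab _ _ _ _ (pierced_forbidden_pair ki khi)); rewrite ?sub0set //.
    by rewrite subUset !sub1set ia ka.
  by rewrite cards2 cards0 eq_sym ki.
have [blo0 | [j]] := set_0Vmem (b :&: lo).
  by case: (pierced_not_forbidden ia dab ahi _ fab); rewrite -setI_eq0 blo0.
rewrite inE => /andP [jb jlo].
have [<- <-] : [set i] = a /\ [set j] = b.
  by apply: (minab _ _ _ _ (pierced_forbidden_sep jlo)); rewrite sub1set.
by rewrite !cards1.
Qed.

End Piercing.

Lemma k_ind_pierced_minimal_forbidden_card k C s t :
  k_ind_pierced k C -> [disjoint s & t] -> minimal_forbidden C s t ->
  (#|s| + #|t| <= 2)%N.
Proof.
move=> Ck; elim: Ck s t => {C} [|C i k' _ [lo [hi [lo_hi _ _ _ C_def]]] _ IH] s t dst mst.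
  by have [-> ->] := minimal_forbidden_trivial_code mst; rewrite cards0.
have remC : code_remove i C \subset C by rewrite {2}C_def subsetUl.
have [ins | nis] := boolP (i \in s).
  by rewrite (pierced_minimal_forbidden_card lo_hi C_def ins dst mst).
have nit := minimal_forbidden_notin remC nis mst.
exact: IH dst (minimal_forbidden_code_remove nis nit mst).
Qed.

End NeuralIdeal.

Theorem proposition1p4 (n : nat) (C : code n) :
  code_conventions C -> ind_pierced C -> degree_two C.
Proof.
move=> conv [k Ck] f Cf; have [[s [t [dst Ef]]] _ _] := Cf.
rewrite Ef in Cf *; have mst := canonical_form_minimal_forbidden dst Cf.
rewrite /mpoly_degree msize_pmono /=; apply/eqP; rewrite eqn_leq.
rewrite (k_ind_pierced_minimal_forbidden_card Ck dst mst).
exact: forbidden_card_ge2 conv mst.1.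
Qed.
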